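(* If $x$, $y$ and $[x,y]$ are monic commutators in $P_n$, then $\sigma([x,y])=\sigma(x)\cup\sigma(y)$.
   Context: $P_n$ denotes the pure braid group on $n$ strands, generated by elements $p_{a,b}$ for $1\le a<b\le n$ subject to the relations: (A) $p_{a,b}p_{a,c}p_{b,c}=p_{a,c}p_{b,c}p_{a,b}=p_{b,c}p_{a,b}p_{a,c}$ for $1\le a<b<c\le n$; (B) $p_{a,b}p_{c,d}=p_{c,d}p_{a,b}$ and $p_{a,d}p_{b,c}=p_{b,c}p_{a,d}$ for $1\le a<b<c<d\le n$; (C) $p_{a,c}p_{b,c}^{-1}p_{b,d}p_{b,c}=p_{b,c}^{-1}p_{b,d}p_{b,c}p_{a,c}$ for $1\le a<b<c<d\le n$. Let $N=\{1,\dots,n\}$. For $S\subseteq N$, $P_S$ is the subgroup generated by the $p_{a,b}$ with $a,b\in S$. Commutator convention: $[x,y]=x^{-1}y^{-1}xy$. Monic commutators are defined recursively: each $p_{a,b}$ and $p_{a,b}^{-1}$ ($1\le a<b\le n$) is a monic commutator; if $x,y$ are monic commutators and $[x,y]\neq1$, then $[x,y]$ is a monic commutator. The support $\sigma(x)$ of $x\in P_n$ is the intersection of all $S\subseteq N$ such that $x\in P_S$. *)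

(* The pure braid group P_n is encoded by its presentation:
   elements are words in the generators p_{a,b}^{+-1}, and equality in P_n is
   the congruence [req] generated by free cancellation and relations (A),(B),(C).
   Strands are indexed 0-based by 'I_n (strand k+1 of the paper is k here). *)
From mathcomp Require Import all_boot.
Set Implicit Arguments. Unset Strict Implicit. Unset Printing Implicit Defensive.

Definition gen (n : nat) := {p : 'I_n * 'I_n | p.1 < p.2}.
Definition gfst n (g : gen n) : 'I_n := (val g).1.
Definition gsnd n (g : gen n) : 'I_n := (val g).2.

(* a letter: (g, false) = g, (g, true) = g^-1 *)
Definition letter (n : nat) := (gen n * bool)%type.
Definition word (n : nat) := seq (letter n).

Definition gp n (g : gen n) : word n := [:: (g, false)].
Definition gpi n (g : gen n) : word n := [:: (g, true)].

Definition winv n (w : word n) : word n := rev (map (fun l => (l.1, ~~ l.2)) w).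
Definition pcomm n (x y : word n) : word n := winv x ++ winv y ++ x ++ y.

Inductive req (n : nat) : word n -> word n -> Prop :=
| req_refl w : req w w
| req_sym u v : req u v -> req v u
| req_trans u v w : req u v -> req v w -> req u w
| req_ctx l r u v : req u v -> req (l ++ u ++ r) (l ++ v ++ r)
| req_cancel (l : letter n) : req [:: l; (l.1, ~~ l.2)] [::]
| req_A1 (gab gac gbc : gen n) :
    gfst gab = gfst gac -> gsnd gab = gfst gbc -> gsnd gac = gsnd gbc ->
    req (gp gab ++ gp gac ++ gp gbc) (gp gac ++ gp gbc ++ gp gab)
| req_A2 (gab gac gbc : gen n) :
    gfst gab = gfst gac -> gsnd gab = gfst gbc -> gsnd gac = gsnd gbc ->
    req (gp gac ++ gp gbc ++ gp gab) (gp gbc ++ gp gab ++ gp gac)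
| req_B1 (gab gcd : gen n) :
    gsnd gab < gfst gcd -> req (gp gab ++ gp gcd) (gp gcd ++ gp gab)
| req_B2 (gad gbc : gen n) :
    gfst gad < gfst gbc -> gsnd gbc < gsnd gad ->
    req (gp gad ++ gp gbc) (gp gbc ++ gp gad)
| req_C (gac gbc gbd : gen n) :
    gfst gac < gfst gbc -> gsnd gac = gsnd gbc -> gfst gbc = gfst gbd ->
    gsnd gbc < gsnd gbd ->
    req (gp gac ++ gpi gbc ++ gp gbd ++ gp gbc)
        (gpi gbc ++ gp gbd ++ gp gbc ++ gp gac).

Definition in_PS n (S : {set 'I_n}) (x : word n) : Prop :=
  exists2 w : word n, req x w &
    all (fun l : letter n => (gfst l.1 \in S) && (gsnd l.1 \in S)) w.

Definition psupport n (x : word n) (i : 'I_n) : Prop :=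
  forall S : {set 'I_n}, in_PS S x -> i \in S.

(* monic commutators, as elements of P_n (closed under equality in P_n) *)
Inductive monic (n : nat) : word n -> Prop :=
| monic_gen (g : gen n) (b : bool) : monic [:: (g, b)]
| monic_comm x y : monic x -> monic y -> ~ req (pcomm x y) [::] -> monic (pcomm x y)
| monic_eq x x' : monic x -> req x x' -> monic x'.

From mathcomp Require Import all_boot.
From mathcomp Require Import zify.
From Stdlib Require Import Classical.

Set Implicit Arguments. Unset Strict Implicit. Unset Printing Implicit Defensive.

(* Deleting strand i (erasing every letter p_{a,b}^{+-1} with i in {a,b}) respects
   relations (A), (B), (C), hence is an endomorphism d_i of P_n; it fixes P_S when
   i is not in S. By induction on monic commutators, d_i x = 1 whenever i lies in
   the support of x, since d_i p_{a,b} = 1 for i in {a,b} and d_i [x,y] =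
   [d_i x, d_i y]. Monic commutators are nontrivial (generators by exponent sum,
   commutators by definition). So if i is in sigma(x) or sigma(y) and [x,y] lies
   in P_S with i not in S, then [x,y] = d_i [x,y] = 1, a contradiction; the other
   inclusion holds because P_S is a subgroup. *)

Section PureBraidWords.
Variable n : nat.
Implicit Types (u v w x y : word n) (S T : {set 'I_n}) (i : 'I_n).

Lemma req_cat u u' v v' : req u u' -> req v v' -> req (u ++ v) (u' ++ v').
Proof.
move=> Hu Hv; apply: (req_trans (v := u' ++ v)); first exact: (req_ctx [::] v Hu).
by have := req_ctx u' [::] Hv; rewrite !cats0.
Qed.

Lemma winv_cons (l : letter n) w : winv (l :: w) = winv w ++ [:: (l.1, ~~ l.2)].
Proof. by rewrite /winv /= rev_cons cats1. Qed.

Lemma req_winvl w : req (winv w ++ w) [::].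
Proof.
elim: w => [|[g b] w IH]; first exact: req_refl.
rewrite winv_cons /= -catA; apply: req_trans IH.
have := req_ctx (winv w) w (req_cancel (g, ~~ b)); by rewrite /= negbK.
Qed.

Lemma req_winvr w : req (w ++ winv w) [::].
Proof.
elim: w => [|[g b] w IH]; first exact: req_refl.
rewrite winv_cons /= catA.
apply: req_trans (req_cancel (g, b)).
exact: (req_ctx [:: (g, b)] [:: (g, ~~ b)] IH).
Qed.

Lemma req_winv u v : req u v -> req (winv u) (winv v).
Proof.
move=> Huv; apply: (req_trans (v := winv u ++ (v ++ winv v))).
  by have := req_cat (req_refl (winv u)) (req_sym (req_winvr v)); rewrite cats0.
rewrite catA; apply: (req_cat (u' := [::]) _ (req_refl (winv v))).
by apply: req_trans (req_winvl u); apply: req_cat (req_refl _) (req_sym Huv).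
Qed.

Lemma req_pcomm x x' y y' : req x x' -> req y y' -> req (pcomm x y) (pcomm x' y').
Proof.
move=> Hx Hy; do 2 (apply: req_cat; first exact: req_winv); exact: req_cat.
Qed.

Lemma pcomm_req1 x y : req x [::] \/ req y [::] -> req (pcomm x y) [::].
Proof.
case=> [Hx | Hy].
  apply: req_trans (req_pcomm Hx (req_refl y)) _.
  by rewrite /pcomm /= ?cats0; exact: req_winvl.
apply: req_trans (req_pcomm (req_refl x) Hy) _.
by rewrite /pcomm /= ?cats0; exact: req_winvl.
Qed.

Definition avoids_strand i (l : letter n) : bool :=
  (gfst l.1 != i) && (gsnd l.1 != i).

Definition del_strand i w : word n := filter (avoids_strand i) w.

Lemma req_del_strand i u v : req u v -> req (del_strand i u) (del_strand i v).
Proof.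
rewrite /del_strand /avoids_strand.
elim=> {u v} /=.
- move=> w; exact: req_refl.
- move=> u v _; exact: req_sym.
- move=> u v w _ H1 _; exact: req_trans H1.
- move=> l r u v _ H; rewrite !filter_cat; exact: req_ctx.
- move=> [g b] /=; case: (_ && _); [exact: (req_cancel (g, b)) | exact: req_refl].
- move=> gab gac gbc e_a e_b e_c; rewrite -e_a -e_b -e_c.
  case: (gfst gab == i); case: (gsnd gab == i); case: (gsnd gac == i) => /=;
    try exact: req_refl; exact: req_A1.
- move=> gab gac gbc e_a e_b e_c; rewrite -e_a -e_b -e_c.
  case: (gfst gab == i); case: (gsnd gab == i); case: (gsnd gac == i) => /=;
    try exact: req_refl; exact: req_A2.
- move=> gab gcd lt_bc.
  case: (gfst gab == i); case: (gsnd gab == i); case: (gfst gcd == i);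
    case: (gsnd gcd == i) => /=; try exact: req_refl; exact: req_B1.
- move=> gad gbc lt_ab lt_cd.
  case: (gfst gad == i); case: (gsnd gad == i); case: (gfst gbc == i);
    case: (gsnd gbc == i) => /=; try exact: req_refl; exact: req_B2.
- move=> gac gbc gbd lt_ab e_c e_b lt_cd; rewrite -e_c -e_b.
  case: (gfst gac == i); case: (gsnd gac == i); case: (gfst gbc == i);
    case: (gsnd gbd == i) => /=; try exact: req_refl; try (apply: req_C; assumption).
  (* only p_{a,c} survives on both sides, once p_{b,c}^-1 p_{b,c} is cancelled *)
  apply: (req_trans (v := [:: (gac, false)])).
    exact: (req_ctx [:: (gac, false)] [::] (req_cancel (gbc, true))).
  exact: req_sym (req_ctx [::] [:: (gac, false)] (req_cancel (gbc, true))).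
Qed.

Lemma del_strand_winv i w : del_strand i (winv w) = winv (del_strand i w).
Proof. by rewrite /del_strand /winv filter_rev filter_map. Qed.

Lemma del_strand_pcomm i x y :
  del_strand i (pcomm x y) = pcomm (del_strand i x) (del_strand i y).
Proof. by rewrite /pcomm /del_strand !filter_cat -!/(del_strand i _) !del_strand_winv. Qed.

Lemma in_PS_req S x x' : req x x' -> in_PS S x -> in_PS S x'.
Proof. by move=> Hx [w Hw HwS]; exists w => //; apply: req_trans (req_sym Hx) Hw. Qed.

Lemma in_PS_subset S T x : S \subset T -> in_PS S x -> in_PS T x.
Proof.
move=> /subsetP sST [w Hw HwS]; exists w => //.
by apply: sub_all HwS => l /andP[/sST-> /sST->].
Qed.

Lemma in_PS_pcomm S x y : in_PS S x -> in_PS S y -> in_PS S (pcomm x y).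
Proof.
move=> [wx Hx HxS] [wy Hy HyS]; exists (pcomm wx wy); first exact: req_pcomm.
by rewrite /pcomm !all_cat /winv !all_rev !all_map HxS HyS.
Qed.

Lemma in_PS_del_strand S i x :
  i \notin S -> in_PS S x -> req (del_strand i x) x.
Proof.
move=> iNS [w Hw HwS]; apply: req_trans (req_sym Hw).
suff Ew : del_strand i w = w by rewrite -Ew; exact: req_del_strand.
apply/all_filterP; apply: sub_all HwS => l /andP[aS bS].
by apply/andP; split; apply: contraNneq iNS => <-.
Qed.

Lemma psupport_req x x' i : req x x' -> psupport x i -> psupport x' i.
Proof. by move=> Hx Hi S HS; apply: Hi; exact: in_PS_req (req_sym Hx) HS. Qed.

Lemma psupport_pcomm x y i :
  psupport (pcomm x y) i -> psupport x i \/ psupport y i.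
Proof.
move=> Hi; apply: NNPP => /not_or_and[Nx Ny].
have [S NS] := not_all_ex_not _ _ Nx; have [xS iNS] := imply_to_and _ _ NS.
have [T NT] := not_all_ex_not _ _ Ny; have [yT iNT] := imply_to_and _ _ NT.
have := Hi (S :|: T) (in_PS_pcomm (in_PS_subset (subsetUl S T) xS)
                                  (in_PS_subset (subsetUr S T) yT)).
by rewrite inE => /orP[].
Qed.

Lemma monic_del_strand x : monic x -> forall i, psupport x i -> req (del_strand i x) [::].
Proof.
elim=> {x}.
- move=> g b i Hi.
  have : i \in [set gfst g; gsnd g].
    apply: Hi; exists [:: (g, b)]; first exact: req_refl.
    by rewrite /= !inE !eqxx orbT.
  rewrite !inE /del_strand /avoids_strand /= => /orP[] /eqP ->;
    rewrite eqxx ?andbF; exact: req_refl.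
- move=> x y _ IHx _ IHy _ i /psupport_pcomm Hi; rewrite del_strand_pcomm.
  by apply: pcomm_req1; case: Hi => [/IHx | /IHy]; [left | right].
- move=> x x' _ IH Hx i Hi.
  apply: req_trans (IH i (psupport_req (req_sym Hx) Hi)).
  exact: req_del_strand (req_sym Hx).
Qed.

(* Invariance of the exponent sum, written without subtraction. *)
Lemma req_letter_balance u v :
  req u v -> count (fun l : letter n => ~~ l.2) u + count snd v
           = count (fun l : letter n => ~~ l.2) v + count snd u.
Proof.
by elim=> {u v}; intros; rewrite /= ?count_cat; lia.
Qed.

Lemma monic_neq1 x : monic x -> ~ req x [::].
Proof.
elim=> {x} //.
- by move=> g [] /req_letter_balance.
- by move=> x x' _ IH Hx H1; apply: IH; exact: req_trans Hx H1.
Qed.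

End PureBraidWords.

Theorem proposition1p6 (n : nat) (x y : word n) :
  monic x -> monic y -> monic (pcomm x y) ->
  forall i : 'I_n, psupport (pcomm x y) i <-> (psupport x i \/ psupport y i).
Proof.
move=> Mx My Mxy i; split; first exact: psupport_pcomm.
move=> Hi S HS; apply/negPn/negP => iNS; apply: (monic_neq1 Mxy).
apply: req_trans (req_sym (in_PS_del_strand iNS HS)) _.
rewrite del_strand_pcomm; apply: pcomm_req1.
by case: Hi => [/(monic_del_strand Mx) | /(monic_del_strand My)]; [left | right].
Qed.
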